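(* Let $d\ge 2$, let $\hat{P}\in\mathbb{R}^{d\times d}$ be an orthogonal projection matrix of rank $p$ with $1\le p\le d-1$, let $\hat{P}^{\perp}=I-\hat{P}$ and $q=d-p$. Let $\lambda_1,\lambda_2>0$, let $k\ge 1$, let $x_{a_0},\dots,x_{a_{k-1}}\in\mathbb{R}^d$ be vectors with $\|x_{a_i}\|\le 1$, let $D_k\in\mathbb{R}^{k\times d}$ be the matrix whose rows are $x_{a_0}^\top,\dots,x_{a_{k-1}}^\top$, and let $B_k=D_k^\top D_k+\lambda_1\hat{P}^{\perp}+\lambda_2\hat{P}$. Then $$\log\left(\frac{\det(B_k)}{\det(\lambda_1\hat{P}^{\perp}+\lambda_2\hat{P})}\right)\le S_k^{\lambda_1,\lambda_2}:=p\log\left(1+\frac{k}{p\lambda_2}\right)+q\log\left(1+\frac{k}{q\lambda_1}\right).$$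
   Context: $\|\cdot\|$ denotes the Euclidean norm. An orthogonal projection matrix is a symmetric idempotent matrix. *)

From HB Require Import structures.
From mathcomp Require Import all_boot all_order all_algebra.
From mathcomp Require Import all_classical all_reals all_analysis.
Set Implicit Arguments. Unset Strict Implicit. Unset Printing Implicit Defensive.
Import Order.TTheory GRing.Theory Num.Theory.
Local Open Scope ring_scope.

Definition eucl_norm (R : realType) (d : nat) (x : 'rV[R]_d) : R :=
  Num.sqrt (\sum_(j < d) x 0 j ^+ 2).

Definition orth_proj (R : realType) (d : nat) (P : 'M[R]_d) : Prop :=
  P^T = P /\ P *m P = P.

(* Write Q = 1 - P and G = D^T D, and put a = lambda2 + tr(PG)/p and
   b = lambda1 + tr(QG)/q.  For T = a^(-1/2) P + b^(-1/2) Q the matrix T B T^T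
   is positive definite and, since PQ = 0, its trace is exactly p + q = d.
   Hadamard's inequality and AM-GM bound its determinant by (trace/d)^d = 1,
   i.e. det B <= a^p b^q.  As det (lambda1 Q + lambda2 P) = lambda2^p lambda1^q
   and tr(PG) + tr(QG) = sum_i |x_i|^2 <= k, taking logarithms gives the bound. *)

From HB Require Import structures.
From mathcomp Require Import all_boot all_order all_algebra.
From mathcomp Require Import all_classical all_reals all_analysis.
From mathcomp Require Import ring zify.
Set Implicit Arguments. Unset Strict Implicit. Unset Printing Implicit Defensive.
Import Order.TTheory GRing.Theory Num.Theory.
Local Open Scope ring_scope.

Lemma det_mxtrace_similar (F : fieldType) m n (S : 'M[F]_(m, n))
    (X : 'M[F]_n) (Y : 'M[F]_m) :
  m = n -> row_free S -> S *m X = Y *m S -> \det X = \det Y /\ \tr X = \tr Y.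
Proof.
move=> e; move: S X; case: n / e => S X; rewrite row_free_unit => S_unit SXY.
have -> : X = invmx S *m Y *m S by rewrite -mulmxA -SXY mulmxA mulVmx ?mul1mx.
split; last by rewrite mxtrace_mulC mulmxA mulmxV ?mul1mx.
by rewrite !det_mulmx det_inv mulrC mulrA mulfV ?mul1r // -unitfE -unitmxE.
Qed.

Section ProjectionCombination.
Variables (F : fieldType) (n : nat) (P : 'M[F]_n).

Definition proj_comb (a b : F) : 'M[F]_n := a *: P + b *: (1%:M - P).

Lemma mxtrace_proj_comb_mul a b (A : 'M[F]_n) :
  \tr (proj_comb a b *m A) = a * \tr (P *m A) + b * \tr ((1%:M - P) *m A).
Proof. by rewrite /proj_comb [in LHS]mulmxDl -!scalemxAl mxtraceD !mxtraceZ. Qed.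

Lemma trmx_compl : P^T = P -> (1%:M - P)^T = 1%:M - P.
Proof. by move=> symP; rewrite linearB /= trmx1 symP. Qed.

Lemma trmx_proj_comb a b : P^T = P -> (proj_comb a b)^T = proj_comb a b.
Proof. by move=> symP; rewrite linearD !linearZ /= trmx_compl ?symP. Qed.

Hypothesis idemP : P *m P = P.

Lemma mulmx_proj_compl : P *m (1%:M - P) = 0.
Proof. by rewrite mulmxBr mulmx1 idemP subrr. Qed.

Lemma mulmx_compl_proj : (1%:M - P) *m P = 0.
Proof. by rewrite mulmxBl mul1mx idemP subrr. Qed.

Lemma compl_idem : (1%:M - P) *m (1%:M - P) = 1%:M - P.
Proof. by rewrite mulmxBl mul1mx mulmx_proj_compl subr0. Qed.

Lemma proj_combM a b c e :
  proj_comb a b *m proj_comb c e = proj_comb (a * c) (b * e).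
Proof.
rewrite /proj_comb mulmxDl !mulmxDr -!scalemxAl -!scalemxAr.
rewrite idemP compl_idem mulmx_proj_compl mulmx_compl_proj !scaler0 addr0 add0r.
by rewrite !scalerA.
Qed.

Lemma det_mxtrace_proj_comb a b :
  \det (proj_comb a b) = a ^+ \rank P * b ^+ (n - \rank P) /\
  \tr (proj_comb a b) = a * (\rank P)%:R + b * (n - \rank P)%:R.
Proof.
set K := kermx P; set r := \rank P; set s := \rank K.
have rK : s = (n - r)%N by rewrite /s mxrank_ker.
have sizeS : (r + s)%N = n by rewrite rK subnKC ?rank_leq_row.
pose S := col_mx (row_base P) (row_base K).
have free_S : row_free S.
  rewrite /row_free -addsmxE (adds_eqmx (eq_row_base P) (eq_row_base K)).
  suff -> : (P + K :=: 1%:M)%MS by rewrite mxrank1 sizeS.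
  apply/eqmxP; rewrite submx1 -[X in (X <= _)%MS](subrK P) addrC.
  by apply: addmx_sub_adds => //; apply/sub_kermxP/mulmx_compl_proj.
have baseP_P : row_base P *m P = row_base P.
  have /submxP [W ->] : (row_base P <= P)%MS by rewrite eq_row_base.
  by rewrite -mulmxA idemP.
have baseK_P : row_base K *m P = 0 by apply/sub_kermxP; rewrite eq_row_base.
have S_similar : S *m proj_comb a b = block_mx a%:M 0 0 b%:M *m S.
  rewrite mul_col_mx mul_block_col !mul0mx addr0 add0r !mul_scalar_mx /proj_comb.
  rewrite !mulmxDr -!scalemxAr !mulmxBr !mulmx1 baseP_P baseK_P subrr subr0.
  by rewrite !scaler0 addr0 add0r.
have [-> ->] := det_mxtrace_similar sizeS free_S S_similar.
by rewrite det_ublock !det_scalar mxtrace_block !mxtrace_scalar rK !mulr_natr.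
Qed.

Lemma det_proj_comb a b :
  \det (proj_comb a b) = a ^+ \rank P * b ^+ (n - \rank P).
Proof. exact: (det_mxtrace_proj_comb a b).1. Qed.

Lemma proj_comb_unit a b : a != 0 -> b != 0 -> proj_comb a b \in unitmx.
Proof.
by move=> a0 b0; rewrite unitmxE det_proj_comb unitfE mulf_neq0 ?expf_neq0.
Qed.

Lemma mxtrace_proj_comb a b :
  \tr (proj_comb a b) = a * (\rank P)%:R + b * (n - \rank P)%:R.
Proof. exact: (det_mxtrace_proj_comb a b).2. Qed.

End ProjectionCombination.

Section PositiveDefinite.
Variable R : realFieldType.

Definition posdefmx n (C : 'M[R]_n) : Prop :=
  C^T = C /\ forall v : 'rV[R]_n, v != 0 -> 0 < (v *m C *m v^T) 0 0.

Lemma mxtrace_mul_tr m n (A : 'M[R]_(m, n)) :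
  \tr (A *m A^T) = \sum_i \sum_j A i j ^+ 2.
Proof.
by apply: eq_bigr => i _; rewrite mxE; apply: eq_bigr => j _; rewrite mxE expr2.
Qed.

Lemma mxtrace_mul_tr_ge0 m n (A : 'M[R]_(m, n)) : 0 <= \tr (A *m A^T).
Proof.
rewrite mxtrace_mul_tr; apply: sumr_ge0 => i _.
by apply: sumr_ge0 => j _; apply: sqr_ge0.
Qed.

Lemma mul_rV_tr_ge0 n (u : 'rV[R]_n) : 0 <= (u *m u^T) 0 0.
Proof. by have := mxtrace_mul_tr_ge0 u; rewrite /mxtrace big_ord1. Qed.

Lemma mul_rV_tr_gt0 n (u : 'rV[R]_n) : u != 0 -> 0 < (u *m u^T) 0 0.
Proof.
apply: contraNT; rewrite -leNgt => u_le0; apply/eqP/rowP => j.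
have := mxtrace_mul_tr u; rewrite /mxtrace !big_ord1 => sum_sq.
have /psumr_eq0P sq0 : \sum_j u 0 j ^+ 2 = 0.
  by rewrite -sum_sq; apply/le_anti; rewrite u_le0 mul_rV_tr_ge0.
by apply/eqP; rewrite mxE -sqrf_eq0 sq0 // => i _; rewrite sqr_ge0.
Qed.

Lemma mxtrace_proj_gram_ge0 k n (P : 'M[R]_n) (D : 'M[R]_(k, n)) :
  P^T = P -> P *m P = P -> 0 <= \tr (P *m (D^T *m D)).
Proof.
move=> symP idemP; rewrite mulmxA mxtrace_mulC.
have -> : D *m (P *m D^T) = (D *m P) *m (D *m P)^T.
  by rewrite trmx_mul symP !mulmxA -(mulmxA D P P) idemP.
exact: mxtrace_mul_tr_ge0.
Qed.

Lemma posdefmx_diag_gt0 n (C : 'M[R]_n) i : posdefmx C -> 0 < C i i.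
Proof.
case=> _ /(_ (delta_mx 0 i)); rewrite trmx_delta -rowE -colE !mxE; apply.
by apply/negP => /eqP/rowP/(_ i); rewrite !mxE !eqxx => /eqP; rewrite oner_eq0.
Qed.

Lemma posdefmx_conj n (C T : 'M[R]_n) :
  T \in unitmx -> posdefmx C -> posdefmx (T *m C *m T^T).
Proof.
move=> T_unit [symC posC]; split; first by rewrite !trmx_mul trmxK symC mulmxA.
move=> v v0; have vT0 : v *m T != 0.
  apply: contraNneq v0 => vT0.
  by rewrite -[v]mulmx1 -(mulmxV T_unit) mulmxA vT0 mul0mx.
by have := posC _ vT0; rewrite trmx_mul !mulmxA.
Qed.

Lemma posdefmx_gram_add k n (D : 'M[R]_(k, n)) (M : 'M[R]_n) :
  posdefmx M -> posdefmx (D^T *m D + M).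
Proof.
case=> symM posM; split; first by rewrite linearD /= trmx_mul trmxK symM.
move=> v v0; rewrite mulmxDr mulmxDl mxE ltr_wpDl ?posM //.
by rewrite !mulmxA -mulmxA -[D]trmxK -trmx_mul trmxK mul_rV_tr_ge0.
Qed.

Lemma posdefmx_proj_comb n (P : 'M[R]_n) a b :
  P^T = P -> P *m P = P -> 0 < a -> 0 < b -> posdefmx (proj_comb P a b).
Proof.
move=> symP idemP a_gt0 b_gt0; split=> [|v v0]; first exact: trmx_proj_comb.
have quad A : A^T = A -> A *m A = A -> v *m A *m v^T = (v *m A) *m (v *m A)^T.
  by move=> symA idemA; rewrite trmx_mul symA mulmxA -(mulmxA v A A) idemA.
have symQ := trmx_compl symP; have idemQ := compl_idem idemP.
rewrite /proj_comb; set Q := 1%:M - P.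
rewrite mulmxDr mulmxDl -!scalemxAr -!scalemxAl (quad P) // (quad Q) //.
rewrite mxE [(a *: (_ : 'M[R]_1)) 0 0]mxE [(b *: (_ : 'M[R]_1)) 0 0]mxE.
have [a_ge0 b_ge0] := (ltW a_gt0, ltW b_gt0).
have [vP0 | vP0] := eqVneq (v *m P) 0.
  have vQ0 : v *m Q != 0 by rewrite mulmxBr mulmx1 vP0 subr0.
  by rewrite ltr_wpDl ?mulr_ge0 ?mulr_gt0 ?mul_rV_tr_ge0 ?mul_rV_tr_gt0.
by rewrite ltr_pwDl ?mulr_ge0 ?mulr_gt0 ?mul_rV_tr_ge0 ?mul_rV_tr_gt0.
Qed.

Lemma posdefmx_drsub m n (A : 'M[R]_(m + n)) :
  posdefmx A -> posdefmx (drsubmx A).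
Proof.
case=> symA posA; split=> [|v v0]; first by rewrite trmx_drsub symA.
have z0 : row_mx (0 : 'rV[R]_m) v != 0 by rewrite row_mx_eq0 negb_and v0 orbT.
have := posA _ z0; rewrite -[in X in X -> _](submxK A) tr_row_mx mul_row_block.
by rewrite mul_row_col !mul0mx !add0r trmx0 mulmx0 add0r.
Qed.

End PositiveDefinite.

Section SchurComplement.
Variables (F : fieldType) (n : nat).
Implicit Type C : 'M[F]_(1 + n).

Definition schur_compl C : 'M[F]_n :=
  drsubmx C - (C ord0 ord0)^-1 *: (dlsubmx C *m ursubmx C).

Definition schur_elim C : 'M[F]_(1 + n) :=
  block_mx 1%:M 0 (- (C ord0 ord0)^-1 *: dlsubmx C) 1%:M.

Lemma ulsubmx_scalar C : ulsubmx C = (C ord0 ord0)%:M.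
Proof. by rewrite [LHS]mx11_scalar !mxE; congr ((C _ _)%:M); apply: val_inj. Qed.

Lemma det_schur_elim C : \det (schur_elim C) = 1.
Proof. by rewrite det_lblock !det1 mulr1. Qed.

Lemma mul_schur_elim C : C ord0 ord0 != 0 ->
  schur_elim C *m C = block_mx (ulsubmx C) (ursubmx C) 0 (schur_compl C).
Proof.
move=> c0; rewrite /schur_elim /schur_compl ulsubmx_scalar.
rewrite -[X in _ *m X = _]submxK mulmx_block ulsubmx_scalar !mul1mx !mul0mx !addr0.
by rewrite mul_mx_scalar scalerA mulrN mulfV // scaleN1r addNr -scalemxAl scaleNr addrC.
Qed.

Lemma det_schur_compl C : C ord0 ord0 != 0 ->
  \det C = C ord0 ord0 * \det (schur_compl C).
Proof.
move=> c0; rewrite -[LHS]mul1r -(det_schur_elim C) -det_mulmx mul_schur_elim //.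
by rewrite det_ublock ulsubmx_scalar det_scalar1.
Qed.

Lemma schur_elim_conj C : C^T = C -> C ord0 ord0 != 0 ->
  schur_elim C *m C *m (schur_elim C)^T = block_mx (ulsubmx C) 0 0 (schur_compl C).
Proof.
move=> symC c0; rewrite mul_schur_elim // tr_block_mx !trmx1 trmx0 mulmx_block.
rewrite !mulmx1 !mulmx0 !mul0mx !addr0 add0r ulsubmx_scalar mul_scalar_mx.
rewrite linearZ /= trmx_dlsub symC scalerA mulrN mulfV // scaleN1r.
by rewrite addNr.
Qed.

End SchurComplement.

Section Hadamard.
Variable R : realFieldType.

Lemma posdefmx_schur_compl n (C : 'M[R]_(1 + n)) :
  posdefmx C -> posdefmx (schur_compl C).
Proof.
move=> posC; have c0 := lt0r_neq0 (posdefmx_diag_gt0 ord0 posC).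
have E_unit : schur_elim C \in unitmx by rewrite unitmxE det_schur_elim unitr1.
have := posdefmx_conj E_unit posC; rewrite schur_elim_conj ?posC.1 //.
by move/posdefmx_drsub; rewrite block_mxKdr.
Qed.

Lemma schur_compl_diag_le n (C : 'M[R]_(1 + n)) i : C^T = C -> 0 < C ord0 ord0 ->
  schur_compl C i i <= C (lift ord0 i) (lift ord0 i).
Proof.
move=> symC c_gt0; rewrite !mxE big_ord1.
have -> : rshift 1 i = lift ord0 i by apply: val_inj.
have -> : ursubmx C ord0 i = dlsubmx C i ord0 by rewrite -[in LHS]symC !mxE.
by rewrite gerBl -expr2 mulr_ge0 ?sqr_ge0 // invr_ge0 (ltW c_gt0).
Qed.

Lemma det_le_prod_diag n (C : 'M[R]_n) : posdefmx C -> \det C <= \prod_i C i i.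
Proof.
elim: n C => [|n IH] C posC; first by rewrite det_mx00 big_ord0.
have c_gt0 := posdefmx_diag_gt0 ord0 posC.
rewrite (det_schur_compl (lt0r_neq0 c_gt0)) big_ord_recl ler_pM2l //.
have posS := posdefmx_schur_compl posC.
apply: le_trans (IH _ posS) _; apply: ler_prod => i _.
by rewrite (ltW (posdefmx_diag_gt0 i posS)) schur_compl_diag_le ?posC.1.
Qed.

Lemma det_le_mean_trace n (C : 'M[R]_n) :
  posdefmx C -> \det C <= (\tr C / n%:R) ^+ n.
Proof.
move=> posC; apply: le_trans (det_le_prod_diag posC) _.
have := (leif_AGM (A := predT) (fun i _ => ltW (posdefmx_diag_gt0 i posC))).1.
by rewrite card_ord.
Qed.

End Hadamard.

Lemma det_gram_add_proj_comb_le (R : rcfType) k n (P : 'M[R]_n)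
    (D : 'M[R]_(k, n)) (a b : R) :
  P^T = P -> P *m P = P -> (0 < \rank P < n)%N -> 0 < a -> 0 < b ->
  \det (D^T *m D + proj_comb P a b)
    <= (a + \tr (P *m (D^T *m D)) / (\rank P)%:R) ^+ \rank P
     * (b + \tr ((1%:M - P) *m (D^T *m D)) / (n - \rank P)%:R) ^+ (n - \rank P).
Proof.
move=> symP idemP /andP[r_gt0 r_lt_n] a_gt0 b_gt0.
have symQ := trmx_compl symP.
set G := D^T *m D; set r := \rank P; set s := (n - r)%N.
set alpha := a + _ / _; set beta := b + _ / _.
have r_pos : 0 < r%:R :> R by rewrite ltr0n.
have s_pos : 0 < s%:R :> R by rewrite ltr0n subn_gt0.
have trPG_ge0 : 0 <= \tr (P *m G) by rewrite mxtrace_proj_gram_ge0.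
have trQG_ge0 : 0 <= \tr ((1%:M - P) *m G).
  by rewrite mxtrace_proj_gram_ge0 ?compl_idem.
have alpha_gt0 : 0 < alpha by rewrite ltr_pwDl // divr_ge0 // (ltW r_pos).
have beta_gt0 : 0 < beta by rewrite ltr_pwDl // divr_ge0 // (ltW s_pos).
pose T := proj_comb P (Num.sqrt alpha^-1) (Num.sqrt beta^-1).
have TtT : T^T *m T = proj_comb P alpha^-1 beta^-1.
  rewrite trmx_proj_comb // proj_combM // -!expr2.
  by rewrite !sqr_sqrtr ?invr_ge0 ?(ltW alpha_gt0) ?(ltW beta_gt0).
have T_unit : T \in unitmx.
  by rewrite proj_comb_unit // sqrtr_eq0 -ltNge invr_gt0.
have posC := posdefmx_conj T_unit
  (posdefmx_gram_add D (posdefmx_proj_comb symP idemP a_gt0 b_gt0)).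
have trC : \tr (T *m (G + proj_comb P a b) *m T^T) = n%:R.
  rewrite mxtrace_mulC mulmxA TtT mulmxDr proj_combM // mxtraceD.
  have n_rs : n%:R = r%:R + s%:R :> R by rewrite -natrD subnKC // ltnW.
  rewrite mxtrace_proj_comb_mul mxtrace_proj_comb -/r -/s // n_rs.
  rewrite /alpha /beta; field.
  by apply/and4P; split; apply: lt0r_neq0; rewrite // ltr_pwDl ?mulr_gt0.
have detTT : \det T * \det T = (alpha ^+ r * beta ^+ s)^-1.
  by rewrite -[X in X * _]det_tr -det_mulmx TtT det_proj_comb // invfM -!exprVn.
have := det_le_mean_trace posC; rewrite trC divff ?expr1n; last first.
  by rewrite pnatr_eq0 -lt0n (ltn_trans r_gt0).
rewrite !det_mulmx det_tr mulrAC detTT mulrC ler_pdivrMr ?mul1r //.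
by rewrite mulr_gt0 ?exprn_gt0.
Qed.

Lemma det_gram_add_proj_comb_ratio_le (R : rcfType) k n (P : 'M[R]_n)
    (D : 'M[R]_(k, n)) (a b t : R) :
  P^T = P -> P *m P = P -> (0 < \rank P < n)%N -> 0 < a -> 0 < b ->
  \tr (D^T *m D) <= t ->
  \det (D^T *m D + proj_comb P a b) / \det (proj_comb P a b)
    <= (1 + t / ((\rank P)%:R * a)) ^+ \rank P
     * (1 + t / ((n - \rank P)%:R * b)) ^+ (n - \rank P).
Proof.
move=> symP idemP rank_bounds a_gt0 b_gt0 trG_le.
have /andP[r_gt0 r_lt_n] := rank_bounds.
have symQ := trmx_compl symP.
set G := D^T *m D; set r := \rank P; set s := (n - r)%N.
have r_pos : 0 < r%:R :> R by rewrite ltr0n.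
have s_pos : 0 < s%:R :> R by rewrite ltr0n subn_gt0.
have trPG_ge0 : 0 <= \tr (P *m G) by rewrite mxtrace_proj_gram_ge0.
have trQG_ge0 : 0 <= \tr ((1%:M - P) *m G).
  by rewrite mxtrace_proj_gram_ge0 ?compl_idem.
have trG : \tr (P *m G) + \tr ((1%:M - P) *m G) = \tr G.
  by rewrite -mxtraceD -mulmxDl addrC subrK mul1mx.
rewrite det_proj_comb // ler_pdivrMr ?mulr_gt0 ?exprn_gt0 //.
rewrite mulrACA -!exprMn !mulrDl !mul1r !invfM !mulrA !mulfVK ?lt0r_neq0 //.
apply: le_trans (det_gram_add_proj_comb_le D symP idemP rank_bounds a_gt0 b_gt0) _.
rewrite -/G -/r -/s.
have trPG_le : \tr (P *m G) <= t by apply: le_trans trG_le; rewrite -trG lerDl.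
have trQG_le : \tr ((1%:M - P) *m G) <= t.
  by apply: le_trans trG_le; rewrite -trG lerDr.
have t_ge0 : 0 <= t by apply: le_trans trPG_le.
have [a_ge0 b_ge0] := (ltW a_gt0, ltW b_gt0).
apply: ler_pM; rewrite ?exprn_ge0 ?addr_ge0 ?divr_ge0 //; apply: lerXn2r;
  by rewrite ?nnegrE ?addr_ge0 ?divr_ge0 ?lerD2l ?ler_pM2r ?invr_gt0.
Qed.

Lemma mxtrace_gram_rows_le (R : realType) k d (x : 'I_k -> 'rV[R]_d) :
  (forall i, eucl_norm (x i) <= 1) ->
  \tr ((\matrix_(i < k) x i)^T *m \matrix_(i < k) x i) <= k%:R.
Proof.
move=> x_le1; rewrite mxtrace_mulC mxtrace_mul_tr -[k in k%:R]card_ord -sumr_const.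
apply: ler_sum => i _.
have -> : \sum_j (\matrix_(i < k) x i) i j ^+ 2 = eucl_norm (x i) ^+ 2.
  rewrite /eucl_norm sqr_sqrtr; last by apply: sumr_ge0 => j _; apply: sqr_ge0.
  by apply: eq_bigr => j _; rewrite mxE.
by rewrite exprn_ile1 ?sqrtr_ge0 ?x_le1.
Qed.

Lemma ln_le_exprM (R : realType) (r s : nat) (u X Y : R) :
  1 <= X -> 1 <= Y -> u <= X ^+ r * Y ^+ s -> ln u <= r%:R * ln X + s%:R * ln Y.
Proof.
move=> X_ge1 Y_ge1 u_le.
have [u_le0 | u_gt0] := lerP u 0.
  by rewrite ln0 // addr_ge0 // mulr_ge0 // ln_ge0.
have [X_gt0 Y_gt0] : 0 < X /\ 0 < Y by split; apply: lt_le_trans ltr01 _.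
rewrite !mulr_natl -!lnXn // -lnM ?posrE ?exprn_gt0 //.
by rewrite ler_ln ?posrE ?mulr_gt0 ?exprn_gt0.
Qed.

Theorem lemma2 (R : realType) (d p k : nat) (P : 'M[R]_d)
  (lambda1 lambda2 : R) (x : 'I_k -> 'rV[R]_d) :
  (2 <= d)%N ->
  orth_proj P -> \rank P = p -> (1 <= p)%N -> (p <= d - 1)%N ->
  0 < lambda1 -> 0 < lambda2 -> (1 <= k)%N ->
  (forall i, eucl_norm (x i) <= 1) ->
  let Pperp := 1%:M - P in
  let q := (d - p)%N in
  let D : 'M[R]_(k, d) := \matrix_(i < k) x i in
  let B := D^T *m D + lambda1 *: Pperp + lambda2 *: P in
  ln (\det B / \det (lambda1 *: Pperp + lambda2 *: P))
    <= p%:R * ln (1 + k%:R / (p%:R * lambda2))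
       + q%:R * ln (1 + k%:R / (q%:R * lambda1)).
Proof.
(* The [let]s of the statement sit under the [is_true] coercion, so they are
   reduced rather than introduced. *)
move=> _ [symP idemP] rankP p_gt0 p_lt_d l1_gt0 l2_gt0 _ x_le1; cbv zeta.
have rank_bounds : (0 < \rank P < d)%N by rewrite rankP p_gt0; lia.
set D := \matrix_(i < k) x i.
rewrite -addrA [_ *: (1%:M - P) + _]addrC -/(proj_comb P lambda2 lambda1).
have [l1_ge0 l2_ge0] := (ltW l1_gt0, ltW l2_gt0).
apply: ln_le_exprM; rewrite ?lerDl ?divr_ge0 ?mulr_ge0 //.
have := det_gram_add_proj_comb_ratio_le symP idemP rank_bounds l2_gt0 l1_gt0
  (mxtrace_gram_rows_le x_le1).
by rewrite rankP.
Qed.
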